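(* Let $n\geq 2$. Let $\mathbf{P}\subseteq\mathbf{Q}$ be structures in $\mathcal{PO}_{n,<_1,\ldots,<_n}$ ($\mathbf{P}$ a substructure of $\mathbf{Q}$). If $f$ is an embedding of $\mathbf{P}$ into $\mathbf{D}_{n,<_1,\ldots,<_n}$, then there is an embedding $g$ of $\mathbf{Q}$ into $\mathbf{D}_{n,<_1,\ldots,<_n}$ which extends $f$.
   Context: Fix $n\geq 2$ and a set $D_n\subseteq\mathbb{Q}^n$ which is dense in $\mathbb{Q}^n$ (product topology) and such that no two distinct points of $D_n$ share a common coordinate. $\mathbf{D}_{n,<_1,\ldots,<_n}=(D_n,<,<_1,\ldots,<_n)$ where $<$ is the product order ($\mathbf{a}<\mathbf{b}$ iff $a_i\leq b_i$ for all $i$ and $\mathbf{a}\neq\mathbf{b}$) and $\mathbf{a}<_i\mathbf{b}$ iff $a_i<b_i$. $\mathcal{PO}_{n,<_1,\ldots,<_n}$ is the class of all finite structures $(P,<,<_1,\ldots,<_n)$ where $<_1,\ldots,<_n$ are strict linear orders on $P$ and $a<b$ iff $a<_ib$ for all $i\leq n$. Embeddings are injective maps preserving and reflecting each of $<,<_1,\ldots,<_n$; substructures carry the induced relations. *)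

From mathcomp Require Import all_boot all_order all_algebra.
Set Implicit Arguments. Unset Strict Implicit. Unset Printing Implicit Defensive.
Import Order.TTheory GRing.Theory Num.Theory.
Local Open Scope ring_scope.

Definition pt (n : nat) := 'I_n -> rat.

Definition prod_lt n (a b : pt n) : Prop := (forall i, a i <= b i) /\ a <> b.

Definition coord_lt n (i : 'I_n) (a b : pt n) : Prop := a i < b i.

(* D is dense in Q^n (product topology): D meets every nonempty basic open
   set, i.e. every product of nonempty open rational intervals. *)
Definition dense_in n (D : pt n -> Prop) : Prop :=
  forall a b : pt n, (forall i, a i < b i) ->
    exists d, D d /\ forall i, a i < d i /\ d i < b i.

Definition distinct_coords n (D : pt n -> Prop) : Prop :=
  forall a b, D a -> D b -> a <> b -> forall i, a i <> b i.

Definition strict_linear (T : finType) (r : rel T) : Prop :=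
  irreflexive r /\ transitive r /\ (forall x y, x != y -> r x y || r y x).

Definition is_PO n (T : finType) (lt : rel T) (lts : 'I_n -> rel T) : Prop :=
  (forall i, strict_linear (lts i)) /\
  (forall x y, lt x y <-> (forall i, lts i x y)).

(* f restricted to A is an embedding of the substructure of (T, lt, lts)
   induced on A into D_{n,<_1,...,<_n} = (D, prod_lt, coord_lt ...):
   injective, lands in D, preserves and reflects < and each <_i. *)
Definition embedding_on n (T : finType) (lt : rel T) (lts : 'I_n -> rel T)
    (A : {set T}) (D : pt n -> Prop) (f : T -> pt n) : Prop :=
  (forall x, x \in A -> D (f x)) /\
  {in A &, injective f} /\
  (forall x y, x \in A -> y \in A ->
     (lt x y <-> prod_lt (f x) (f y)) /\
     (forall i, lts i x y <-> coord_lt i (f x) (f y))).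

From mathcomp Require Import all_boot all_order all_algebra.
From mathcomp Require Import lra.
Set Implicit Arguments. Unset Strict Implicit. Unset Printing Implicit Defensive.
Import Order.TTheory GRing.Theory Num.Theory.
Local Open Scope ring_scope.

(* Extend f one point at a time.  For a new point x and each coordinate i,
   the images of the points of A that are <_i-below x lie strictly below the
   images of those <_i-above x, so some open box consists of points placed
   correctly with respect to every f z in every coordinate, and density puts
   a point d of D in it.  As each <_i is linear, every coordinate of d
   differs from that of each f z, so the product order between d and f z is
   decided coordinatewise, exactly as < is in a structure of PO_n. *)

Lemma separating_box (R : realDomainType) n (I : finType)
    (P Q : 'I_n -> pred I) (F : I -> 'I_n -> R) :
  (forall i a b, P i a -> Q i b -> F a i < F b i) ->
  exists l u : 'I_n -> R, forall i, [/\ l i < u i,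
    forall a, P i a -> F a i <= l i & forall b, Q i b -> u i <= F b i].
Proof.
move=> PltQ.
pose lo i := \big[Order.min/0]_a F a i - 1.
pose hi i := \big[Order.max/0]_a F a i + 1.
exists (fun i => \big[Order.max/lo i]_(a | P i a) F a i).
exists (fun i => \big[Order.min/hi i]_(b | Q i b) F b i) => i.
have lo_lt a : lo i < F a i.
  by have := bigmin_le 0 a (F ^~ i); rewrite /lo; lra.
have lt_hi a : F a i < hi i.
  by have := le_bigmax 0 (F ^~ i) a; rewrite /hi; lra.
split.
- apply/bigmax_ltP; split.
    apply/bigmin_gtP; split=> [|b _]; last exact: lo_lt.
    have := bigmin_le_id (index_enum I) 0 xpredT (F ^~ i).
    have := bigmax_ge_id (index_enum I) 0 xpredT (F ^~ i).
    by rewrite /lo /hi; lra.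
  by move=> a Pa; apply/bigmin_gtP; split=> // b Qb; apply: PltQ.
- by move=> a Pa; apply: le_bigmax_cond.
- by move=> b Qb; apply: bigmin_le_cond.
Qed.

Lemma prod_lt_coordE n (i0 : 'I_n) (p q : pt n) : (forall i, p i != q i) ->
  prod_lt p q <-> forall i, coord_lt i p q.
Proof.
move=> pq_neq; split=> [[p_le_q _] i | p_lt_q].
  by rewrite /coord_lt lt_neqAle pq_neq p_le_q.
split=> [i|pq]; first exact/ltW/p_lt_q.
by have := pq_neq i0; rewrite pq eqxx.
Qed.

Section PO_embeddings.

Variables (n : nat) (i0 : 'I_n) (T : finType) (lt : rel T) (lts : 'I_n -> rel T).
Hypothesis HQ : is_PO lt lts.
Variable D : pt n -> Prop.

Lemma PO_ltsxx i x : lts i x x = false.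
Proof. by have [irr _] := HQ.1 i; exact: irr. Qed.

Lemma PO_lts_total i x y : x != y -> lts i x y || lts i y x.
Proof. by have [_ [_ tot]] := HQ.1 i; apply: tot. Qed.

Lemma PO_lts_trans i : transitive (lts i).
Proof. by have [_ [tr _]] := HQ.1 i. Qed.

Lemma PO_ltxx x : ~ lt x x.
Proof. by move/(HQ.2 x x)/(_ i0); rewrite PO_ltsxx. Qed.

Lemma embedding_on_coord (A : {set T}) (g : T -> pt n) :
  (forall x, x \in A -> D (g x)) ->
  (forall x y i, x \in A -> y \in A -> lts i x y <-> coord_lt i (g x) (g y)) ->
  embedding_on lt lts A D g.
Proof.
move=> gD g_lts.
have g_neq x y i : x \in A -> y \in A -> x != y -> g x i != g y i.
  move=> xA yA /(PO_lts_total i)/orP[/(g_lts _ _ _ xA yA)|/(g_lts _ _ _ yA xA)].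
    by move/lt_eqF->.
  by move/gt_eqF->.
split=> //; split=> [x y xA yA gxy|x y xA yA].
  by apply/eqP/negPn/negP => /(g_neq _ _ i0 xA yA); rewrite gxy eqxx.
split=> [|i]; last exact: g_lts.
have [<-|xy] := eqVneq x y; first by split=> [/PO_ltxx|[]].
have coordE := prod_lt_coordE i0 (fun i => g_neq x y i xA yA xy).
split=> [/(HQ.2 x y) lts_xy | /coordE lt_gxy].
  by apply/coordE => i; apply/(g_lts _ _ i xA yA).
by apply/(HQ.2 x y) => i; apply/(g_lts _ _ i xA yA).
Qed.

Hypothesis Ddense : dense_in D.

Lemma exists_separating_point (A : {set T}) f x :
  embedding_on lt lts A D f ->
  exists2 d, D d & forall z i, z \in A ->
    (lts i z x -> f z i < d i) /\ (lts i x z -> d i < f z i).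
Proof.
case=> _ [_ f_rel].
have below_lt_above i a b :
    (a \in A) && lts i a x -> (b \in A) && lts i x b -> f a i < f b i.
  move=> /andP[aA ax] /andP[bA xb].
  exact/((f_rel a b aA bA).2 i)/(PO_lts_trans ax xb).
have [l [u lu]] := separating_box below_lt_above.
have [d [dD ld]] := Ddense (fun i => let: And3 l_lt_u _ _ := lu i in l_lt_u).
exists d => // z i zA; have [_ below above] := lu i; have [l_d d_u] := ld i.
split=> [zx|xz].
  by apply: le_lt_trans l_d; apply: below; rewrite zA.
by apply: lt_le_trans d_u _; apply: above; rewrite zA.
Qed.

Lemma embedding_on_setU1 (A : {set T}) f x d :
  embedding_on lt lts A D f -> x \notin A -> D d ->
  (forall z i, z \in A ->
    (lts i z x -> f z i < d i) /\ (lts i x z -> d i < f z i)) ->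
  embedding_on lt lts (x |: A) D (fun y => if y == x then d else f y).
Proof.
move=> [fD [_ f_rel]] xA dD d_sep.
have zx_neq z : z \in A -> z != x by apply: contraTneq => ->.
have lts_zx z i : z \in A -> lts i z x <-> coord_lt i (f z) d.
  move=> zA; split=> [/(d_sep z i zA).1 // | f_lt_d].
  case/orP: (PO_lts_total i (zx_neq z zA)) => // /(d_sep z i zA).2 d_lt_f.
  by have := lt_trans f_lt_d d_lt_f; rewrite ltxx.
have lts_xz z i : z \in A -> lts i x z <-> coord_lt i d (f z).
  move=> zA; split=> [/(d_sep z i zA).2 // | d_lt_f].
  case/orP: (PO_lts_total i (zx_neq z zA)) => // /(d_sep z i zA).1 f_lt_d.
  by have := lt_trans f_lt_d d_lt_f; rewrite ltxx.
apply: embedding_on_coord => [y | y z i]; rewrite !in_setU1.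
  by case/predU1P => [->|yA]; rewrite ?eqxx // (negPf (zx_neq _ yA)); apply: fD.
case/predU1P => [->|yA] /predU1P[->|zA];
  rewrite ?eqxx ?(negPf (zx_neq _ yA)) ?(negPf (zx_neq _ zA)).
- by rewrite PO_ltsxx /coord_lt ltxx.
- exact: lts_xz.
- exact: lts_zx.
- exact: (f_rel y z yA zA).2.
Qed.

Lemma embedding_on_extend (A : {set T}) f : embedding_on lt lts A D f ->
  exists g, embedding_on lt lts [set: T] D g /\ forall x, x \in A -> g x = f x.
Proof.
have [k] := ubnP #|~: A|; elim: k A f => // k IH A f cardA f_emb.
have [A_full | [x]] := set_0Vmem (~: A).
  by exists f; move: f_emb; rewrite -(setCK A) A_full setC0.
rewrite inE => xA.
have [d dD d_sep] := exists_separating_point x f_emb.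
have [|g [g_emb g_f]] := IH _ _ _ (embedding_on_setU1 f_emb xA dD d_sep).
  have shrink : (#|~: (x |: A)| < #|~: A|)%N.
    by apply/proper_card; rewrite properC properUr // sub1set.
  by apply: leq_trans shrink _; rewrite -ltnS.
exists g; split=> // y yA.
rewrite g_f ?in_setU1 ?yA ?orbT //.
by case: eqP yA => // ->; rewrite (negPf xA).
Qed.

End PO_embeddings.

Theorem lemma3p1 (n : nat) (hn : (2 <= n)%N) (D : pt n -> Prop)
  (Ddense : dense_in D) (Ddist : distinct_coords D)
  (T : finType) (lt : rel T) (lts : 'I_n -> rel T) (HQ : is_PO lt lts)
  (A : {set T}) (f : T -> pt n) (Hf : embedding_on lt lts A D f) :
  exists g : T -> pt n,
    embedding_on lt lts [set: T] D g /\ (forall x, x \in A -> g x = f x).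
Proof. exact: (embedding_on_extend (Ordinal (ltnW hn)) HQ Ddense Hf). Qed.
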